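(* Let $M\ge 2$ and $0<p_1<p_2<\cdots<p_M$. For $i=1,\dots,M$ define the linear functions $\eta_i(c)=p_i c+\log p_i$ of $c\in\mathbb R$, and for $i\ne j$ let $c_{i,j}=-(\log p_i-\log p_j)/(p_i-p_j)$, so that $\eta_i(c_{i,j})=\eta_j(c_{i,j})$. For $i<j$ define the level of intersection $$\sigma_{i,j}=\big|\{\,l\in\{1,\dots,M\}:\ \eta_l(c_{i,j})<\eta_i(c_{i,j})=\eta_j(c_{i,j})\,\}\big|,$$ and for $s\ge 0$ let $I(s)=\{(i,j):\ 1\le i<j\le M,\ \sigma_{i,j}=s\}$. Then for every $0\le s\le M-2$, $$I(s)=\{(i,\,M-s+i-1):\ i=1,\dots,s+1\}.$$ *)

From Stdlib Require Import Reals Lra Lia List.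
Open Scope R_scope.

Definition eta (p : nat -> R) (i : nat) (c : R) : R := p i * c + ln (p i).

Definition cij (p : nat -> R) (i j : nat) : R :=
  - (ln (p i) - ln (p j)) / (p i - p j).

Definition sigma_lvl (M : nat) (p : nat -> R) (i j : nat) : nat :=
  length (filter (fun l => if Rlt_dec (eta p l (cij p i j)) (eta p i (cij p i j))
                           then true else false) (seq 1 M)).

From Stdlib Require Import Reals Lra Lia List.
Open Scope R_scope.

(* At c = c_{i,j} we have eta_l(c) = f(p_l) with f(x) = c x + log x, which is
   strictly concave on (0, oo) and takes equal values at p_i and p_j.  Hence
   f(p_l) lies strictly below that common value exactly when p_l is outside
   [p_i, p_j], i.e. when l < i or l > j, so sigma_{i,j} = (i - 1) + (M - j), and
   the claim is the arithmetic of solving (i - 1) + (M - j) = s. *)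

Lemma ln_sub_bounds x y : 0 < x -> x < y ->
  x * (ln y - ln x) < y - x < y * (ln y - ln x).
Proof.
intros Hx Hxy.
set (d := ln y - ln x).
assert (Hd : d <> 0) by (pose proof (ln_increasing x y Hx Hxy); unfold d; lra).
assert (Ey : y = x * exp d).
{ unfold d, Rminus; rewrite exp_plus, exp_Ropp, !exp_ln by lra; field; lra. }
assert (Einv : exp d * exp (- d) = 1) by (rewrite <- exp_plus, Rplus_opp_r; apply exp_0).
pose proof (exp_ineq1 d Hd) as Hup.
pose proof (exp_ineq1 (- d) ltac:(lra)) as Hlo.
pose proof (exp_pos d); pose proof (exp_pos (- d)).
split; nra.
Qed.

Lemma ln_three_chord x y z : 0 < x -> x < y -> y < z ->
  (ln z - ln y) * (y - x) < (ln y - ln x) * (z - y).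
Proof.
intros Hx Hxy Hyz.
destruct (ln_sub_bounds x y Hx Hxy) as [_ Hl].
destruct (ln_sub_bounds y z ltac:(lra) Hyz) as [Hr _].
apply (Rmult_lt_reg_l y); [lra|].
apply Rlt_trans with ((z - y) * (y - x)); nra.
Qed.

Section EqualLevel.

Variables a b c : R.
Hypothesis Ha : 0 < a.
Hypothesis Hab : a < b.
Hypothesis Hlevel : a * c + ln a = b * c + ln b.

Lemma level_lt_below x : 0 < x -> x < a -> x * c + ln x < a * c + ln a.
Proof.
intros Hx Hxa.
pose proof (ln_three_chord x a b Hx Hxa Hab).
apply (Rmult_lt_reg_r (b - a)); nra.
Qed.

Lemma level_gt_between x : a < x -> x < b -> a * c + ln a < x * c + ln x.
Proof.
intros Hax Hxb.
pose proof (ln_three_chord a x b Ha Hax Hxb).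
apply (Rmult_lt_reg_r (b - a)); nra.
Qed.

Lemma level_lt_above x : b < x -> x * c + ln x < a * c + ln a.
Proof.
intros Hbx.
pose proof (ln_three_chord a b x Ha Hab Hbx).
apply (Rmult_lt_reg_r (b - a)); nra.
Qed.

End EqualLevel.

Lemma eta_cij_eq p i j : p i <> p j -> eta p i (cij p i j) = eta p j (cij p i j).
Proof. intros Hne; unfold eta, cij; field; lra. Qed.

Lemma length_filter_outside_seq i j n : (i < j)%nat ->
  length (filter (fun l => orb (Nat.ltb l i) (Nat.ltb j l)) (seq 1 n))
  = (Nat.min n (i - 1) + (n - j))%nat.
Proof.
intros Hij; induction n as [|n IH]; [simpl; lia|].
rewrite seq_S, filter_app, length_app, IH; cbn [filter].
replace (1 + n)%nat with (S n) by lia.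
destruct (Nat.ltb_spec (S n) i), (Nat.ltb_spec j (S n)); cbn [orb length]; lia.
Qed.

Section IncreasingWeights.

Variables (M : nat) (p : nat -> R).
Hypothesis Hpos : 0 < p 1%nat.
Hypothesis Hinc : forall i : nat, (1 <= i)%nat -> (i < M)%nat -> p i < p (S i).

Lemma p_lt a b : (1 <= a)%nat -> (a < b)%nat -> (b <= M)%nat -> p a < p b.
Proof.
intros Ha Hab; induction b as [|b IH]; [lia|]; intros Hb.
destruct (Nat.eq_dec a b) as [->|Hne]; [apply Hinc; lia|].
apply Rlt_trans with (p b); [apply IH; lia | apply Hinc; lia].
Qed.

Lemma p_pos a : (1 <= a)%nat -> (a <= M)%nat -> 0 < p a.
Proof.
intros H1 H2; destruct (Nat.eq_dec a 1) as [->|]; [exact Hpos|].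
apply Rlt_trans with (p 1%nat); [exact Hpos | apply p_lt; lia].
Qed.

Lemma eta_lt_at_cij_iff i j l :
  (1 <= i)%nat -> (i < j)%nat -> (j <= M)%nat -> (1 <= l)%nat -> (l <= M)%nat ->
  eta p l (cij p i j) < eta p i (cij p i j) <-> (l < i \/ j < l)%nat.
Proof.
intros Hi Hij Hj Hl1 Hl2.
assert (Hpi : 0 < p i) by (apply p_pos; lia).
assert (Hpij : p i < p j) by (apply p_lt; lia).
assert (Hlevel := eta_cij_eq p i j ltac:(lra)); unfold eta in *.
split.
- intros Hlt.
  destruct (Nat.lt_ge_cases l i) as [|Hil]; [now left|].
  destruct (Nat.lt_ge_cases j l) as [|Hlj]; [now right|].
  exfalso.
  destruct (Nat.eq_dec l i) as [->|Hli]; [lra|].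
  destruct (Nat.eq_dec l j) as [->|Hlj']; [lra|].
  pose proof (level_gt_between (p i) (p j) _ Hpi Hpij Hlevel (p l)
                (p_lt i l ltac:(lia) ltac:(lia) ltac:(lia))
                (p_lt l j ltac:(lia) ltac:(lia) ltac:(lia))).
  lra.
- intros [Hli|Hjl].
  + apply (level_lt_below (p i) (p j) _ Hpij Hlevel);
      [apply p_pos | apply p_lt]; lia.
  + apply (level_lt_above (p i) (p j) _ Hpi Hpij Hlevel), p_lt; lia.
Qed.

Lemma sigma_lvl_eq i j : (1 <= i)%nat -> (i < j)%nat -> (j <= M)%nat ->
  sigma_lvl M p i j = (i - 1 + (M - j))%nat.
Proof.
intros Hi Hij Hj; unfold sigma_lvl.
rewrite (filter_ext_in _ (fun l => orb (Nat.ltb l i) (Nat.ltb j l))).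
- rewrite length_filter_outside_seq by exact Hij; lia.
- intros l Hl; apply in_seq in Hl.
  pose proof (eta_lt_at_cij_iff i j l Hi Hij Hj ltac:(lia) ltac:(lia)) as Hiff.
  destruct Rlt_dec as [Hlt|Hnlt];
    destruct (Nat.ltb_spec l i), (Nat.ltb_spec j l); simpl; try reflexivity.
  + apply Hiff in Hlt; lia.
  + exfalso; apply Hnlt, Hiff; lia.
  + exfalso; apply Hnlt, Hiff; lia.
  + exfalso; apply Hnlt, Hiff; lia.
Qed.

End IncreasingWeights.

Theorem lemma2 (M : nat) (p : nat -> R)
  (HM : (2 <= M)%nat)
  (Hpos : 0 < p 1%nat)
  (Hinc : forall i : nat, (1 <= i)%nat -> (i < M)%nat -> p i < p (S i))
  (s : nat) (Hs : (s <= M - 2)%nat) :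
  forall i j : nat,
    (((1 <= i)%nat /\ (i < j)%nat /\ (j <= M)%nat /\ (sigma_lvl M p i j = s)%nat)
     <-> ((1 <= i)%nat /\ (i <= s + 1)%nat /\ j = (M - s + i - 1)%nat)).
Proof.
intros i j; split.
- intros (Hi & Hij & Hj & Hsig).
  rewrite (sigma_lvl_eq M p Hpos Hinc i j Hi Hij Hj) in Hsig; lia.
- intros (Hi & His & ->).
  repeat split; try lia.
  rewrite (sigma_lvl_eq M p Hpos Hinc); lia.
Qed.
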